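(* Let $(\Omega,\mathcal A)$ be a measurable space and let $K$ be a random compact set in $\mathbb C^n$. Then $\widehat K=R\widehat K$, i.e. for every $\omega$, $\widehat{K(\omega)}=\{z\in\mathbb C^n:|p(\omega,z)|\le\max_{x\in K(\omega)}|p(\omega,x)| \text{ for all random polynomials } p\}$.
   Context: A random compact set is a measurable map from $\Omega$ to the space of non-empty compact subsets of $\mathbb C^n$ with the Hausdorff distance and its Borel $\sigma$-algebra. A random polynomial is a function $p:\Omega\times\mathbb C^n\to\mathbb C$ with $p(\omega,\cdot)$ a polynomial for each $\omega$ and $p(\cdot,z)$ measurable for each $z$. $\widehat L=\{z:|p(z)|\le\max_L|p| \text{ for all polynomials } p\}$. *)

From HB Require Import structures.
From mathcomp Require Import all_boot all_order all_algebra.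
From mathcomp Require Import all_classical all_reals all_analysis.
From mathcomp Require Import complex.
Set Implicit Arguments. Unset Strict Implicit. Unset Printing Implicit Defensive.
Import Order.TTheory GRing.Theory Num.Theory.
Local Open Scope classical_set_scope.
Local Open Scope ring_scope.

Section Defs.
Variables (R : realType) (n : nat).

Definition Cn := 'I_n -> R[i].

Definition cabs (z : R[i]) : R := ComplexField.Normc.normc z.

Definition edist (z w : Cn) : R := Num.sqrt (\sum_(i < n) cabs (z i - w i) ^+ 2).

Definition eopen (U : set Cn) : Prop :=
  forall z, U z -> exists2 e : R, 0 < e & forall w, edist z w < e -> U w.

Definition ecompact (A : set Cn) : Prop :=
  forall (I : Type) (U : I -> set Cn), (forall i, eopen (U i)) ->
    A `<=` \bigcup_i U i ->
    exists2 F : set I, finite_set F & A `<=` \bigcup_(i in F) U i.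

Definition hyperspace : set (set Cn) := [set A | A !=set0 /\ ecompact A].

Definition hdist (A B : set Cn) : R :=
  Num.max (sup [set inf [set edist a b | b in B] | a in A])
          (sup [set inf [set edist a b | a in A] | b in B]).

Definition hopen (G : set (set Cn)) : Prop :=
  G `<=` hyperspace /\
  forall A, G A -> exists2 e : R, 0 < e &
    forall B, hyperspace B -> hdist A B < e -> G B.

Definition hborel : set (set (set Cn)) := <<s hyperspace, hopen >>.

Definition is_poly (f : Cn -> R[i]) : Prop :=
  exists (d : nat) (c : {ffun {ffun 'I_n -> 'I_d} -> R[i]}),
    forall z, f z = \sum_(a : {ffun 'I_n -> 'I_d}) c a * \prod_(j < n) z j ^+ a j.

(* max over L of |f| (attained when L is non-empty compact, f continuous) *)
Definition maxabs (L : set Cn) (f : Cn -> R[i]) : R :=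
  sup [set cabs (f x) | x in L].

Definition phull (L : set Cn) : set Cn :=
  [set z | forall f, is_poly f -> cabs (f z) <= maxabs L f].

Section Random.
Variables (d : measure_display) (Omega : measurableType d).

Definition random_compact (K : Omega -> set Cn) : Prop :=
  (forall w, hyperspace (K w)) /\
  (forall B, hborel B -> measurable (K @^-1` B)).

(* random polynomial; a C-valued map is measurable iff its real and
   imaginary parts are *)
Definition random_poly (p : Omega -> Cn -> R[i]) : Prop :=
  (forall w, is_poly (p w)) /\
  (forall z, measurable_fun setT (fun w => @complex.Re R (p w z)) /\
             measurable_fun setT (fun w => @complex.Im R (p w z))).

Definition rphull (K : Omega -> set Cn) (w : Omega) : set Cn :=
  [set z | forall p, random_poly p -> cabs (p w z) <= maxabs (K w) (p w)].

End Random.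
End Defs.

From mathcomp Require Import all_boot all_order all_algebra.
From mathcomp Require Import all_classical all_reals all_analysis.
From mathcomp Require Import complex.
Local Open Scope classical_set_scope.

Section RandomHull.
Variables (R : realType) (n : nat) (d : measure_display) (Omega : measurableType d).

Lemma random_poly_cst (f : Cn R n -> R[i]) :
  is_poly f -> random_poly (fun _ : Omega => f).
Proof. by move=> fP; split=> // z; split; exact: measurable_cst. Qed.

Lemma random_poly_is_poly (w : Omega) (p : Omega -> Cn R n -> R[i]) :
  random_poly p -> is_poly (p w).
Proof. by case. Qed.

Lemma rphull_sub_phull (K : Omega -> set (Cn R n)) (w : Omega) :
  rphull K w `<=` phull (K w).
Proof. by move=> z zK f /(@random_poly_cst f); exact: zK. Qed.

Lemma phull_sub_rphull (K : Omega -> set (Cn R n)) (w : Omega) :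
  phull (K w) `<=` rphull K w.
Proof. by move=> z zK p /(random_poly_is_poly w); exact: zK. Qed.

End RandomHull.

Theorem proposition6p15 (R : realType) (n : nat) (d : measure_display)
  (Omega : measurableType d) (K : Omega -> set (Cn R n)) :
  random_compact K ->
  forall w : Omega, phull (K w) = rphull K w.
Proof.
move=> _ w; apply/seteqP; split.
- exact: phull_sub_rphull.
- exact: rphull_sub_phull.
Qed.
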